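(* Let $V,W$ be Euclidean spaces, $v_1,v_2,v_3\in V$, $w_1,w_2,w_3\in W$, and put $\alpha=v_1\otimes w_1$, $\beta=v_2\otimes w_2$, $\gamma=v_3\otimes w_3$ in $V\otimes W$. Then \begin{align*} |\alpha\wedge\beta\wedge\gamma|^2 &= |v_1|^2|v_2|^2|v_3|^2|w_1\wedge w_2\wedge w_3|^2+|v_1\wedge v_2\wedge v_3|^2|w_1|^2|w_2|^2|w_3|^2\\ &\quad-\tfrac12\sum_{i=1}^3|v_i|^2|v_{i'}\wedge v_{i''}|^2|w_i|^2|w_{i'}\wedge w_{i''}|^2 +\tfrac12\sum_{i\ne j}|v_i|^2|v_{i'}\wedge v_{i''}|^2|w_j|^2|w_{j'}\wedge w_{j''}|^2\\ &\quad-\tfrac12\sum_{i=1}^3|v_i|^2|v_{i'}\wedge v_{i''}|^2|w_1\wedge w_2\wedge w_3|^2 -\tfrac12\sum_{i=1}^3|v_1\wedge v_2\wedge v_3|^2|w_i|^2|w_{i'}\wedge w_{i''}|^2\\ &\quad+\tfrac12|v_1\wedge v_2\wedge v_3|^2|w_1\wedge w_2\wedge w_3|^2, \end{align*} where for each index $i\in\{1,2,3\}$, $\{i',i''\}$ denotes the two indices complementary to $i$ (and likewise for $j$), and the sum $\sum_{i\neq j}$ runs over ordered pairs $(i,j)$ with $i,j\in\{1,2,3\}$, $i\ne j$.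
   Context: $V\otimes W$ carries the inner product $(v\otimes w,v'\otimes w')=(v,v')(w,w')$. For vectors $x_1,\dots,x_k$ in a Euclidean space, $|x_1\wedge\cdots\wedge x_k|^2=\det\big((x_i,x_j)\big)_{i,j}$ (the squared $k$-dimensional volume of the parallelepiped they span), i.e. the norm in $\bigwedge^k$ with the inner product $(x_1\wedge\cdots\wedge x_k,y_1\wedge\cdots\wedge y_k)=\sum_{\sigma\in S_k}\mathrm{sgn}(\sigma)\prod_i (x_i,y_{\sigma(i)})$. *)

From HB Require Import structures.
From mathcomp Require Import all_boot all_order all_algebra.
From mathcomp Require Import reals.
Set Implicit Arguments. Unset Strict Implicit. Unset Printing Implicit Defensive.
Import Order.TTheory GRing.Theory Num.Theory.
Local Open Scope ring_scope.

Definition dotv (R : realType) (n : nat) (u v : 'rV[R]_n) : R :=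
  \sum_(i < n) u 0 i * v 0 i.

(* V (x) W for V = R^n, W = R^m is realized as 'M_(n, m); v (x) w is the outer
   product, and the inner product is (A, B) = sum_{i,j} A i j * B i j, which
   satisfies (v (x) w, v' (x) w') = (v, v') (w, w'). *)
Definition tens (R : realType) (n m : nat) (v : 'rV[R]_n) (w : 'rV[R]_m)
  : 'M[R]_(n, m) := v^T *m w.

Definition dotm (R : realType) (n m : nat) (A B : 'M[R]_(n, m)) : R :=
  \sum_(i < n) \sum_(j < m) A i j * B i j.

(* |x_1 /\ ... /\ x_k|^2 = det of the Gram matrix ((x_i, x_j))_{i,j}. *)
Definition wedge_sq (R : realType) (T : Type) (ip : T -> T -> R) (k : nat)
  (x : 'I_k -> T) : R :=
  \det (\matrix_(i < k, j < k) ip (x i) (x j)).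

Definition fam2 (T : Type) (a b : T) : 'I_2 -> T :=
  fun i => if val i == 0%N then a else b.
Definition fam3 (T : Type) (a b c : T) : 'I_3 -> T :=
  fun i => if val i == 0%N then a else if val i == 1%N then b else c.

(* the two indices complementary to i in {0,1,2}: i' = i+1, i'' = i+2 (mod 3) *)
Definition cp1 (i : 'I_3) : 'I_3 := inord ((val i + 1) %% 3).
Definition cp2 (i : 'I_3) : 'I_3 := inord ((val i + 2) %% 3).

From HB Require Import structures.
From mathcomp Require Import all_boot all_order all_algebra.
From mathcomp Require Import reals ring.
Set Implicit Arguments.
Unset Strict Implicit.
Unset Printing Implicit Defensive.
Import Order.TTheory GRing.Theory Num.Theory.
Local Open Scope ring_scope.

(* The Gram matrix of the v_i (x) w_i is the entrywise product of the Gram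
   matrices of the v_i and of the w_i, because (v (x) w, v' (x) w') =
   (v, v') (w, w').  Writing all Gram determinants (3x3 and 2x2) explicitly
   in the six inner products of each family, the claim becomes a polynomial
   identity in these twelve inner products. *)

Lemma det_mx22 (R : comNzRingType) (A : 'M[R]_2) :
  \det A = A 0 0 * A 1 1 - A 0 1 * A 1 0.
Proof.
pose f i j := A (inord i) (inord j).
have -> : A = \matrix_(i, j) f (val i) (val j).
  by apply/matrixP => i j; rewrite mxE /f !inord_val.
rewrite (expand_det_row _ ord0) !big_ord_recr big_ord0 /cofactor /=.
by rewrite !det_mx11 !mxE /= expr0 expr1; ring.
Qed.

Lemma det_mx33 (R : comNzRingType) (A : 'M[R]_3) :
  \det A = A 0 0 * (A 1 1 * A 2 2 - A 1 2 * A 2 1)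
         - A 0 1 * (A 1 0 * A 2 2 - A 1 2 * A 2 0)
         + A 0 2 * (A 1 0 * A 2 1 - A 1 1 * A 2 0).
Proof.
pose f i j := A (inord i) (inord j).
have -> : A = \matrix_(i, j) f (val i) (val j).
  by apply/matrixP => i j; rewrite mxE /f !inord_val.
rewrite (expand_det_row _ ord0) !big_ord_recr big_ord0 /cofactor /=.
by rewrite !det_mx22 !mxE /= expr0 expr1 expr2; ring.
Qed.

Section GramDeterminants.

Variables (R : realType) (T : Type) (ip : T -> T -> R).
Hypothesis ipC : forall x y, ip x y = ip y x.

Lemma wedge_sq_fam2 (a b : T) :
  wedge_sq ip (fam2 a b) = ip a a * ip b b - ip a b ^+ 2.
Proof. by rewrite /wedge_sq det_mx22 !mxE /fam2 /= [ip b a]ipC; ring. Qed.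

Lemma wedge_sq_fam3 (a b c : T) :
  wedge_sq ip (fam3 a b c) =
    ip a a * ip b b * ip c c + 2 * ip a b * ip b c * ip c a
    - ip a a * ip b c ^+ 2 - ip b b * ip c a ^+ 2 - ip c c * ip a b ^+ 2.
Proof.
by rewrite /wedge_sq det_mx33 !mxE /fam3 /= [ip b a]ipC [ip c b]ipC [ip a c]ipC; ring.
Qed.

End GramDeterminants.

Lemma dotvC (R : realType) (n : nat) (u v : 'rV[R]_n) : dotv u v = dotv v u.
Proof. by apply: eq_bigr => i _; rewrite mulrC. Qed.

Lemma dotmC (R : realType) (n m : nat) (A B : 'M[R]_(n, m)) : dotm A B = dotm B A.
Proof. by apply: eq_bigr => i _; apply: eq_bigr => j _; rewrite mulrC. Qed.

Lemma dotm_tens (R : realType) (n m : nat) (v v' : 'rV[R]_n) (w w' : 'rV[R]_m) :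
  dotm (tens v w) (tens v' w') = dotv v v' * dotv w w'.
Proof.
rewrite /dotm /dotv big_distrl /=; apply: eq_bigr => i _.
rewrite big_distrr /=; apply: eq_bigr => j _.
by rewrite !mxE !big_ord1 !mxE; ring.
Qed.

Lemma sumr_offdiag (V : zmodType) (I : finType) (F : I -> I -> V) :
  \sum_i \sum_(j | i != j) F i j = \sum_i \sum_j F i j - \sum_i F i i.
Proof.
have split_diag i : \sum_j F i j = F i i + \sum_(j | i != j) F i j.
  by rewrite (bigD1 i) //=; congr (_ + _); apply: eq_bigl => j; rewrite eq_sym.
by rewrite (eq_bigr _ (fun i _ => split_diag i)) big_split /= addrC addrK.
Qed.

Theorem lemma2 (R : realType) (n m : nat) (v1 v2 v3 : 'rV[R]_n)
  (w1 w2 w3 : 'rV[R]_m) :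
  let v := fam3 v1 v2 v3 in
  let w := fam3 w1 w2 w3 in
  let nv i := dotv (v i) (v i) in
  let nw i := dotv (w i) (w i) in
  let v2i i := wedge_sq (@dotv R n) (fam2 (v (cp1 i)) (v (cp2 i))) in
  let w2i i := wedge_sq (@dotv R m) (fam2 (w (cp1 i)) (w (cp2 i))) in
  let V3 := wedge_sq (@dotv R n) v in
  let W3 := wedge_sq (@dotv R m) w in
  let alpha := tens v1 w1 in
  let beta := tens v2 w2 in
  let gamma := tens v3 w3 in
  wedge_sq (@dotm R n m) (fam3 alpha beta gamma) =
    nv 0 * nv 1 * nv 2 * W3 + V3 * nw 0 * nw 1 * nw 2
    - 2^-1 * \sum_(i < 3) nv i * v2i i * nw i * w2i i
    + 2^-1 * \sum_(i < 3) \sum_(j < 3 | i != j) nv i * v2i i * nw j * w2i j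
    - 2^-1 * \sum_(i < 3) nv i * v2i i * W3
    - 2^-1 * \sum_(i < 3) V3 * nw i * w2i i
    + 2^-1 * V3 * W3.
Proof.
move=> v w nv nw v2i w2i V3 W3 alpha beta gamma.
rewrite sumr_offdiag !big_ord_recr !big_ord0.
rewrite /v2i /w2i /V3 /W3 /nv /nw /v /w /alpha /beta /gamma.
rewrite !(wedge_sq_fam2 (@dotvC R _)) !(wedge_sq_fam3 (@dotvC R _)).
rewrite (wedge_sq_fam3 (@dotmC R n m)) !dotm_tens /fam3 /cp1 /cp2 /= !inordK //=.
by field.
Qed.
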